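(* Let $(\mathbb X,d,\delta)$ be a nondegenerate dilation structure and let $x\in\mathbb X$. Then the function $d^x$ is a quasimetric on $B^d(x,R)$ with the same constants $c_{\mathbb X}$ and $Q_{\mathbb X}$ (in the generalized symmetry property and the generalized triangle inequality) as the quasimetric $d$.
   Context: A quasimetric space $(\mathbb X,d)$ is a topological space $\mathbb X$ with a map $d:\mathbb X\times\mathbb X\to[0,\infty)$ such that: (i) $d(u,v)=0$ iff $u=v$; (ii) $d(u,v)\le c_{\mathbb X}\,d(v,u)$ for a constant $1\le c_{\mathbb X}<\infty$ (generalized symmetry); (iii) $d(u,v)\le Q_{\mathbb X}(d(u,w)+d(w,v))$ for a constant $1\le Q_{\mathbb X}<\infty$ (generalized triangle inequality); (iv) $d(u,v)$ is upper semicontinuous in the first argument. The topology of $\mathbb X$ is assumed to coincide with the topology induced by $d$. Write $B^d(x,r)=\{y: d(y,x)<r\}$ and $\bar B^d(x,r)$ for its closure; $\mathbb X$ is boundedly compact if closed bounded sets are compact. A dilation structure $(\mathbb X,d,\delta)$ is a complete boundedly compact quasimetric space $(\mathbb X,d)$ with $d$ continuous in both arguments, satisfying: (A0) For every $x\in\mathbb X$ and $\varepsilon\in(0,1]$ there are a neighborhood $U(x)$ of $x$ and homeomorphisms (dilations) $\delta^x_\varepsilon:U(x)\to V_\varepsilon(x)$ and $\delta^x_{\varepsilon^{-1}}:W_{\varepsilon^{-1}}(x)\to U(x)$ with $V_\varepsilon(x)\subseteq W_{\varepsilon^{-1}}(x)\subseteq U(x)$; the family $\{\delta^x_\varepsilon\}_{\varepsilon\in(0,1]}$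 is continuous in $\varepsilon$; there is $R>0$ with $\bar B^d(x,R)\subseteq U(x)$ for all $x$, and for all $\varepsilon<1$ and $\tilde r>0$ with $\bar B^d(x,\tilde r)\subseteq U(x)$ one has $B^d(x,\tilde r\varepsilon)\subseteq\delta^x_\varepsilon B^d(x,\tilde r)\subset B^d(x,\tilde r)$. (A1) For all $x$ and $y\in U(x)$: $\delta^x_\varepsilon x=x$, $\delta^x_1=\mathrm{id}$, $\lim_{\varepsilon\to0}\delta^x_\varepsilon y=x$. (A2) $\delta^x_\varepsilon\delta^x_\mu u=\delta^x_{\varepsilon\mu}u$ for $u\in U(x)$ whenever both sides are defined. (A3) For every $x$, the limit $d^x(u,v)=\lim_{\varepsilon\to0}\frac1\varepsilon d(\delta^x_\varepsilon u,\delta^x_\varepsilon v)$ exists uniformly in $u,v\in\bar B^d(x,R)$. The dilation structure is nondegenerate if $d^x(u,v)=0$ implies $u=v$. *)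

(* concrete reals R. The topology of X is the one induced by the
   quasimetric d (as assumed in the paper), so all topological notions are
   defined from d. *)
From Stdlib Require Import Reals List.
Open Scope R_scope.
Set Implicit Arguments.

Section QM.
Variable X : Type.
Variable d : X -> X -> R.

Definition ball (x : X) (r : R) : X -> Prop := fun y => d y x < r.

Definition is_open (A : X -> Prop) : Prop :=
  forall x, A x -> exists r, 0 < r /\ forall y, ball x r y -> A y.

Definition is_closed (A : X -> Prop) : Prop := is_open (fun x => ~ A x).

Definition nbhd (x : X) (N : X -> Prop) : Prop :=
  exists O, is_open O /\ O x /\ forall y, O y -> N y.

Definition closure (A : X -> Prop) : X -> Prop :=
  fun x => forall N, nbhd x N -> exists y, N y /\ A y.

Definition closed_ball (x : X) (r : R) : X -> Prop := closure (ball x r).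

Definition bounded (A : X -> Prop) : Prop :=
  exists x r, forall y, A y -> d y x < r.

Definition compact (K : X -> Prop) : Prop :=
  forall (I : Type) (O : I -> X -> Prop),
    (forall i, is_open (O i)) ->
    (forall x, K x -> exists i, O i x) ->
    exists l : list I, forall x, K x -> exists i, In i l /\ O i x.

Definition boundedly_compact : Prop :=
  forall A, is_closed A -> bounded A -> compact A.

Definition cauchy_seq (u : nat -> X) : Prop :=
  forall e, 0 < e -> exists N, forall m n, (N <= m)%nat -> (N <= n)%nat ->
    d (u m) (u n) < e.

Definition seq_converges (u : nat -> X) (l : X) : Prop :=
  forall Nb, nbhd l Nb -> exists N, forall n, (N <= n)%nat -> Nb (u n).

Definition complete : Prop :=
  forall u, cauchy_seq u -> exists l, seq_converges u l.

Definition usc_on (A : X -> Prop) (f : X -> R) : Prop :=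
  forall u, A u -> forall e, 0 < e ->
    exists N, nbhd u N /\ forall u', A u' -> N u' -> f u' < f u + e.

Definition quasimetric_on (A : X -> Prop) (dd : X -> X -> R) (c Q : R) : Prop :=
  1 <= c /\ 1 <= Q /\
  (forall u v, A u -> A v -> 0 <= dd u v) /\
  (forall u v, A u -> A v -> (dd u v = 0 <-> u = v)) /\
  (forall u v, A u -> A v -> dd u v <= c * dd v u) /\
  (forall u v w, A u -> A v -> A w -> dd u v <= Q * (dd u w + dd w v)) /\
  (forall v, A v -> usc_on A (fun u => dd u v)).

Definition jointly_continuous : Prop :=
  forall u v e, 0 < e -> exists N1 N2, nbhd u N1 /\ nbhd v N2 /\
    forall u' v', N1 u' -> N2 v' -> Rabs (d u' v' - d u v) < e.

Definition homeo_on (A B : X -> Prop) (f : X -> X) : Prop :=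
  (forall a, A a -> B (f a)) /\
  (forall b, B b -> exists a, A a /\ f a = b) /\
  (forall a a', A a -> A a' -> f a = f a' -> a = a') /\
  (forall a, A a -> forall N, nbhd (f a) N ->
     exists M, nbhd a M /\ forall a', A a' -> M a' -> N (f a')) /\
  (* continuity of the inverse of f on B *)
  (forall a, A a -> forall M, nbhd a M ->
     exists N, nbhd (f a) N /\ forall a', A a' -> N (f a') -> M a').

Definition image (A : X -> Prop) (f : X -> X) : X -> Prop :=
  fun y => exists a, A a /\ f a = y.

End QM.

(* Dilation structure (X, d, delta).
   - U x      : the neighbourhood U(x)
   - W x t    : the set W_t(x) for t = eps^-1 >= 1
   - delta x e: the dilation delta^x_e (for e in (0,1] defined on U x,
                for e >= 1 defined on W x e)
   - V_e(x)   : image of U x under delta x e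
   - R0       : the constant R of (A0)
   - dx x     : the limit function d^x of (A3). *)
Definition dil_dom {X : Type} (U : X -> X -> Prop) (W : X -> R -> X -> Prop)
  (x : X) (e : R) : X -> Prop :=
  fun y => 0 < e /\ (e <= 1 -> U x y) /\ (1 < e -> W x e y).

Record dilation_structure {X : Type} (d : X -> X -> R) (c Q : R)
  (U : X -> X -> Prop) (W : X -> R -> X -> Prop) (delta : X -> R -> X -> X)
  (R0 : R) (dx : X -> X -> X -> R) : Prop := {
  ds_quasimetric : quasimetric_on d (fun _ => True) d c Q;
  ds_complete : complete d;
  ds_boundedly_compact : boundedly_compact d;
  ds_continuous : jointly_continuous d;
  ds_U_nbhd : forall x, nbhd d x (U x);
  ds_homeo : forall x e, 0 < e <= 1 ->
      homeo_on d (U x) (image (U x) (delta x e)) (delta x e);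
  ds_homeo_inv : forall x e, 0 < e <= 1 ->
      homeo_on d (W x (/ e)) (U x) (delta x (/ e));
  ds_V_sub_W : forall x e y, 0 < e <= 1 ->
      image (U x) (delta x e) y -> W x (/ e) y;
  ds_W_sub_U : forall x e y, 0 < e <= 1 -> W x (/ e) y -> U x y;
  ds_cont_eps : forall x y, U x y -> forall e, 0 < e <= 1 ->
      forall N, nbhd d (delta x e y) N ->
      exists eta, 0 < eta /\ forall e', 0 < e' <= 1 -> Rabs (e' - e) < eta ->
        N (delta x e' y);
  ds_R0_pos : 0 < R0;
  ds_R0_ball : forall x y, closed_ball d x R0 y -> U x y;
  ds_ball_incl : forall x e r, 0 < e < 1 -> 0 < r ->
      (forall y, closed_ball d x r y -> U x y) ->
      (forall y, ball d x (r * e) y -> image (ball d x r) (delta x e) y) /\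
      (forall y, image (ball d x r) (delta x e) y -> ball d x r y);
  ds_fix : forall x e, 0 < e <= 1 -> delta x e x = x;
  ds_one : forall x y, U x y -> delta x 1 y = y;
  ds_lim0 : forall x y, U x y -> forall N, nbhd d x N ->
      exists eta, 0 < eta /\ forall e, 0 < e <= 1 -> e < eta -> N (delta x e y);
  ds_semigroup : forall x e mu u, 0 < e -> 0 < mu -> U x u ->
      dil_dom U W x mu u -> dil_dom U W x e (delta x mu u) ->
      dil_dom U W x (e * mu) u ->
      delta x e (delta x mu u) = delta x (e * mu) u;
  ds_A3 : forall x eps, 0 < eps -> exists eta, 0 < eta /\
      forall e, 0 < e <= 1 -> e < eta ->
      forall u v, closed_ball d x R0 u -> closed_ball d x R0 v ->
        Rabs (/ e * d (delta x e u) (delta x e v) - dx x u v) < eps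
}.

Definition nondegenerate {X : Type} (d : X -> X -> R) (R0 : R)
  (dx : X -> X -> X -> R) : Prop :=
  forall x u v, closed_ball d x R0 u -> closed_ball d x R0 v ->
    dx x u v = 0 -> u = v.

(** The rescaled distances [/ e * d (delta x e u) (delta x e v)] satisfy the
    quasimetric inequalities with the constants of [d], since these are
    invariant under multiplication by [/ e > 0]; being non-strict, the
    inequalities survive the limit [e -> 0] that defines [d^x]. Nondegeneracy
    is exactly the missing implication [d^x u v = 0 -> u = v]. Finally [d^x]
    is a uniform limit of the continuous functions
    [u |-> / e * d (delta x e u) (delta x e v)], hence continuous, in
    particular upper semicontinuous. *)
From Stdlib Require Import Reals Lra Psatz.
Open Scope R_scope.

Lemma nbhd_self {X : Type} {d : X -> X -> R} {x : X} {N : X -> Prop} :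
  nbhd d x N -> N x.
Proof. intros [O [_ [Ox HO]]]; now apply HO. Qed.

Lemma ball_sub_closed_ball {X : Type} {d : X -> X -> R} {x : X} {r : R} {y : X} :
  ball d x r y -> closed_ball d x r y.
Proof. intros Hy N HN; exists y; split; [exact (nbhd_self HN) | exact Hy]. Qed.

Lemma Rle_plus_scaled_epsilon (a b K : R) :
  0 < K -> (forall eps, 0 < eps -> a <= b + K * eps) -> a <= b.
Proof.
  intros HK H; apply Rle_plus_epsilon; intros eps Heps.
  replace eps with (K * (eps / K)) by (field; lra).
  apply H, Rdiv_lt_0_compat; assumption.
Qed.

Section RescaledDistance.

Set Implicit Arguments.

Variables (X : Type) (d : X -> X -> R) (c Q : R) (delta : X -> R -> X -> X) (x : X).
Hypothesis Hqm : quasimetric_on d (fun _ => True) d c Q.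

Definition dil_dist (e : R) (u v : X) : R := / e * d (delta x e u) (delta x e v).

Lemma dil_dist_ge0 e u v : 0 < e -> 0 <= dil_dist e u v.
Proof.
  intros He; apply Rmult_le_pos.
  - now apply Rlt_le, Rinv_0_lt_compat.
  - now apply Hqm.
Qed.

Lemma dil_dist_xx e u : dil_dist e u u = 0.
Proof.
  unfold dil_dist; replace (d _ _) with 0 by (symmetry; now apply Hqm).
  apply Rmult_0_r.
Qed.

Lemma dil_dist_quasi_sym e u v : 0 < e -> dil_dist e u v <= c * dil_dist e v u.
Proof.
  intros He; unfold dil_dist.
  replace (c * _) with (/ e * (c * d (delta x e v) (delta x e u))) by ring.
  apply Rmult_le_compat_l; [now apply Rlt_le, Rinv_0_lt_compat | now apply Hqm].
Qed.

Lemma dil_dist_quasi_triangle e u v w : 0 < e ->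
  dil_dist e u v <= Q * (dil_dist e u w + dil_dist e w v).
Proof.
  intros He; unfold dil_dist.
  replace (Q * _) with
    (/ e * (Q * (d (delta x e u) (delta x e w) + d (delta x e w) (delta x e v))))
    by ring.
  apply Rmult_le_compat_l; [now apply Rlt_le, Rinv_0_lt_compat | now apply Hqm].
Qed.

End RescaledDistance.

Section DilationLimit.

Set Implicit Arguments.

Variables (X : Type) (d : X -> X -> R) (c Q : R).
Variables (U : X -> X -> Prop) (W : X -> R -> X -> Prop).
Variables (delta : X -> R -> X -> X) (R0 : R) (dx : X -> X -> X -> R).
Hypothesis Hds : dilation_structure d c Q U W delta R0 dx.
Variable x : X.

Let Hqm := ds_quasimetric Hds.
Local Notation dil_dist := (dil_dist d delta x).

Lemma dil_dist_continuous_l e v u : 0 < e <= 1 -> U x u ->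
  forall eps, 0 < eps -> exists M, nbhd d u M /\
    forall u', U x u' -> M u' -> Rabs (dil_dist e u' v - dil_dist e u v) < eps.
Proof.
  intros He Hu eps Heps.
  assert (Hscaled : 0 < e * eps) by nra.
  destruct (ds_continuous Hds (delta x e u) (delta x e v) Hscaled)
    as [N1 [N2 [HN1 [HN2 HN]]]].
  destruct (ds_homeo Hds x He) as [_ [_ [_ [Hcont _]]]].
  destruct (Hcont u Hu N1 HN1) as [M [HM HMN1]].
  exists M; split; [exact HM|]; intros u' Hu' Mu'.
  specialize (HN _ _ (HMN1 u' Hu' Mu') (nbhd_self HN2)).
  unfold dil_dist; rewrite <- Rmult_minus_distr_l, Rabs_mult,
    Rabs_inv, (Rabs_pos_eq e) by lra.
  apply (Rmult_lt_reg_l e); [lra|].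
  rewrite <- Rmult_assoc, Rinv_r, Rmult_1_l by lra; exact HN.
Qed.

Lemma dil_dist_approx eps : 0 < eps ->
  exists e, 0 < e <= 1 /\ forall u v, ball d x R0 u -> ball d x R0 v ->
    Rabs (dil_dist e u v - dx x u v) < eps.
Proof.
  intros Heps; destruct (ds_A3 Hds x Heps) as [eta [Heta Hlim]].
  exists (Rmin 1 (eta / 2)).
  pose proof (Rmin_l 1 (eta / 2)); pose proof (Rmin_r 1 (eta / 2)).
  assert (0 < Rmin 1 (eta / 2)) by (apply Rmin_glb_lt; lra).
  split; [lra|]; intros u v Hu Hv.
  apply Hlim; try lra; now apply ball_sub_closed_ball.
Qed.

Lemma dx_ge0 u v : ball d x R0 u -> ball d x R0 v -> 0 <= dx x u v.
Proof.
  intros Hu Hv; apply Rle_plus_epsilon; intros eps Heps.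
  destruct (dil_dist_approx Heps) as [e [He Happ]].
  pose proof (Rabs_def2 _ _ (Happ u v Hu Hv)).
  pose proof (dil_dist_ge0 delta x Hqm u v (proj1 He)); lra.
Qed.

Lemma dx_xx u : ball d x R0 u -> dx x u u = 0.
Proof.
  intros Hu; apply Rle_antisym; [|exact (dx_ge0 Hu Hu)].
  apply Rle_plus_epsilon; intros eps Heps.
  destruct (dil_dist_approx Heps) as [e [He Happ]].
  pose proof (Rabs_def2 _ _ (Happ u u Hu Hu)).
  rewrite (dil_dist_xx delta x Hqm) in *; lra.
Qed.

Lemma dx_quasi_sym u v : ball d x R0 u -> ball d x R0 v ->
  dx x u v <= c * dx x v u.
Proof.
  intros Hu Hv; apply (Rle_plus_scaled_epsilon _ _ (c + 1)); [destruct Hqm; lra|].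
  intros eps Heps.
  destruct (dil_dist_approx Heps) as [e [He Happ]].
  pose proof (Rabs_def2 _ _ (Happ u v Hu Hv)).
  pose proof (Rabs_def2 _ _ (Happ v u Hv Hu)).
  pose proof (dil_dist_quasi_sym delta x Hqm u v (proj1 He)).
  destruct Hqm; nra.
Qed.

Lemma dx_quasi_triangle u v w :
  ball d x R0 u -> ball d x R0 v -> ball d x R0 w ->
  dx x u v <= Q * (dx x u w + dx x w v).
Proof.
  intros Hu Hv Hw; apply (Rle_plus_scaled_epsilon _ _ (2 * Q + 1)).
  { destruct Hqm as [_ [HQ _]]; lra. }
  intros eps Heps.
  destruct (dil_dist_approx Heps) as [e [He Happ]].
  pose proof (Rabs_def2 _ _ (Happ u v Hu Hv)).
  pose proof (Rabs_def2 _ _ (Happ u w Hu Hw)).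
  pose proof (Rabs_def2 _ _ (Happ w v Hw Hv)).
  pose proof (dil_dist_quasi_triangle delta x Hqm u v w (proj1 He)).
  destruct Hqm as [_ [HQ _]]; nra.
Qed.

Lemma dx_continuous_l v u : ball d x R0 v -> ball d x R0 u ->
  forall eps, 0 < eps -> exists M, nbhd d u M /\
    forall u', ball d x R0 u' -> M u' -> Rabs (dx x u' v - dx x u v) < eps.
Proof.
  intros Hv Hu eps Heps.
  destruct (dil_dist_approx (eps := eps / 3)) as [e [He Happ]]; [lra|].
  assert (HU : forall y, ball d x R0 y -> U x y).
  { intros y Hy; now apply (ds_R0_ball Hds), ball_sub_closed_ball. }
  destruct (dil_dist_continuous_l v He (HU u Hu) (eps := eps / 3))
    as [M [HM Hclose]]; [lra|].
  exists M; split; [exact HM|]; intros u' Hu' Mu'.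
  pose proof (Rabs_def2 _ _ (Hclose u' (HU u' Hu') Mu')).
  pose proof (Rabs_def2 _ _ (Happ u v Hu Hv)).
  pose proof (Rabs_def2 _ _ (Happ u' v Hu' Hv)).
  apply Rabs_def1; lra.
Qed.

Lemma dx_usc_l v : ball d x R0 v -> usc_on d (ball d x R0) (fun u => dx x u v).
Proof.
  intros Hv u Hu eps Heps.
  destruct (dx_continuous_l Hv Hu Heps) as [M [HM Hclose]].
  exists M; split; [exact HM|]; intros u' Hu' Mu'.
  pose proof (Rabs_def2 _ _ (Hclose u' Hu' Mu')); lra.
Qed.

End DilationLimit.

Theorem proposition1 (X : Type) (d : X -> X -> R) (c Q : R)
  (U : X -> X -> Prop) (W : X -> R -> X -> Prop) (delta : X -> R -> X -> X)
  (R0 : R) (dx : X -> X -> X -> R) :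
  dilation_structure d c Q U W delta R0 dx ->
  nondegenerate d R0 dx ->
  forall x : X, quasimetric_on d (ball d x R0) (dx x) c Q.
Proof.
  intros Hds Hnd x.
  destruct (ds_quasimetric Hds) as [Hc [HQ _]].
  refine (conj Hc (conj HQ (conj _ (conj _ (conj _ (conj _ _)))))).
  - intros u v; apply (dx_ge0 Hds).
  - intros u v Hu Hv; split.
    + exact (Hnd x u v (ball_sub_closed_ball Hu) (ball_sub_closed_ball Hv)).
    + intros <-; apply (dx_xx Hds), Hu.
  - intros u v; apply (dx_quasi_sym Hds).
  - intros u v w; apply (dx_quasi_triangle Hds).
  - intros v; apply (dx_usc_l Hds).
Qed.
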